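(* Let $\mathcal{G}^{c}=(\mathbb{C},\mathbb{E}^{c})$ be a C-DMG over DMGs and $\mathbb{C}_X,\mathbb{C}_Y,\mathbb{C}_Z,\mathbb{C}_W$ pairwise disjoint subsets of $\mathbb{C}$, with $X,Y,Z,W$ the unions of the clusters in them. If the $\sigma$-separation condition of one of the three do-calculus rules fails in $\mathcal{G}^c$, then there exists a DMG $\mathcal{G}$ compatible with $\mathcal{G}^c$ in which the corresponding condition fails. Explicitly: (Rule 1) if $\mathbb{C}_Y$ and $\mathbb{C}_X$ are not $\sigma$-separated given $\mathbb{C}_W,do(\mathbb{C}_Z)$ in $\mathcal{G}^c$, then $Y$ and $X$ are not $\sigma$-separated given $W,do(Z)$ in $\mathcal{G}$; (Rule 2) if $\mathbb{C}_Y$ and $\mathbb{I}_{\mathbb{C}_X}$ are not $\sigma$-separated given $\mathbb{C}_X,\mathbb{C}_W,do(\mathbb{C}_Z)$ in $\mathcal{G}^c$, then $Y$ and $\mathbb{I}_X$ are not $\sigma$-separated given $X,W,do(Z)$ in $\mathcal{G}$; (Rule 3) if $\mathbb{C}_Y$ and $\mathbb{I}_{\mathbb{C}_X}$ are not $\sigma$-separated given $\mathbb{C}_W,do(\mathbb{C}_Z)$ in $\mathcal{G}^c$, then $Y$ and $\mathbb{I}_X$ are not $\sigma$-separated given $W,do(Z)$ in $\mathcal{G}$.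
   Context: A DMG $\mathcal{G}=(\mathbb{V},\mathbb{E})$ has directed edges $\to$ and bidirected edges $\leftrightarrow$, cycles allowed (DMGs induced by input/output structural causal models in the sense of Forré–Mooij 2020). A C-DMG over DMGs $\mathcal{G}^c=(\mathbb{C},\mathbb{E}^c)$ is obtained from such a DMG: $\mathbb{C}$ is a partition of $\mathbb{V}$ into nonempty clusters, and for all $C_i,C_j$ (possibly equal) $C_i\to C_j$ (resp. $C_i\leftrightarrow C_j$) is in $\mathbb{E}^c$ iff some $V_i\in C_i,V_j\in C_j$ have $V_i\to V_j$ (resp. $V_i\leftrightarrow V_j$) in $\mathbb{E}$; $\mathcal{G}$ is then compatible with $\mathcal{G}^c$. Extended graph: add for every vertex $V$ a new vertex $I_V$ and edge $I_V\to V$; $\mathbb{I}_{\mathbb{C}_X}=\{I_C:C\in\mathbb{C}_X\}$, $\mathbb{I}_X=\{I_V:V\in X\}$. ''$A$ and $B$ are $\sigma$-separated given $C,do(D)$ in $\mathcal{G}^*$'' means: in the extended graph of $\mathcal{G}^*$ with all directed edges into $D$ and all bidirected edges incident to $D$ removed, $A$ and $B$ are $\sigma$-separated by $C\cup D$. $\sigma$-separation: with $\mathrm{Sc}(V)=\mathrm{Anc}(V)\cap\mathrm{Desc}(V)$ (a vertex is its own ancestor/descendant), $A\mathbin{*\!\!\to}B$ meaning $A\to B$ or $A\leftrightarrow B$, $A\mathbin{\leftarrow\!\!*}B$ meaning $A\leftarrow B$ or $A\leftrightarrow B$, a walk $\langle V_1,\dots,V_n\rangle$ is $\sigma$-blocked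 by $W$ if (1) $V_1\in W$ or $V_n\in W$; or for some $1<i<n$: (2) $V_{i-1}\mathbin{*\!\!\to}V_i\mathbin{\leftarrow\!\!*}V_{i+1}$ and $V_i\notin W$; (3) $V_{i-1}\leftarrow V_i\mathbin{\leftarrow\!\!*}V_{i+1}$ and $V_i\in W\setminus\mathrm{Sc}(V_{i-1})$; (4) $V_{i-1}\mathbin{*\!\!\to}V_i\to V_{i+1}$ and $V_i\in W\setminus\mathrm{Sc}(V_{i+1})$; (5) $V_{i-1}\leftarrow V_i\to V_{i+1}$ and $V_i\in W\setminus(\mathrm{Sc}(V_{i-1})\cap\mathrm{Sc}(V_{i+1}))$; $W$ $\sigma$-separates $A,B$ if every walk from $A$ to $B$ is $\sigma$-blocked by $W$. *)

From mathcomp Require Import all_boot.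
Set Implicit Arguments. Unset Strict Implicit. Unset Printing Implicit Defensive.

Record mg (T : finType) := MG { gdir : rel T; gbi : rel T }.

Definition is_dmg (T : finType) (G : mg T) : Prop :=
  irreflexive (gdir G) /\ symmetric (gbi G) /\ irreflexive (gbi G).

(* Cluster graph induced by the partition [cl : V -> K] (blocks = fibres of cl). *)
Definition compatible (V K : finType) (cl : V -> K) (G : mg V) (Gc : mg K) : Prop :=
  forall k l : K,
    gdir Gc k l = [exists u, exists v, [&& cl u == k, cl v == l & gdir G u v]] /\
    gbi Gc k l = [exists u, exists v, [&& cl u == k, cl v == l & gbi G u v]].

(* Extended graph: inl v is the original vertex v, inr v is I_v with I_v -> v. *)
Definition ext (T : finType) (G : mg T) : mg (T + T)%type :=
  MG (fun a b => match a, b with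
                 | inl x, inl y => gdir G x y
                 | inr x, inl y => x == y
                 | _, _ => false end)
     (fun a b => match a, b with
                 | inl x, inl y => gbi G x y
                 | _, _ => false end).

Definition mutilate (T : finType) (G : mg T) (D : {set T}) : mg T :=
  MG (fun a b => gdir G a b && (b \notin D))
     (fun a b => [&& gbi G a b, a \notin D & b \notin D]).

(* Edge kinds along a walk, relative to the direction of traversal:
   Fwd : x -> y, Bwd : x <- y, Bi : x <-> y. *)
Inductive ekind := Fwd | Bwd | Bi.

Definition edge_ok (T : finType) (G : mg T) (x : T) (k : ekind) (y : T) : bool :=
  match k with Fwd => gdir G x y | Bwd => gdir G y x | Bi => gbi G x y end.

(* A walk is a start vertex x and a list of steps (edge kind, next vertex). *)
Fixpoint is_walk (T : finType) (G : mg T) (x : T) (s : seq (ekind * T)) : bool :=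
  match s with
  | [::] => true
  | (k, y) :: s' => edge_ok G x k y && is_walk G y s'
  end.

(* u \in Sc(v) = Anc(v) \cap Desc(v) (reflexive). *)
Definition in_sc (T : finType) (G : mg T) (v u : T) : bool :=
  connect (gdir G) u v && connect (gdir G) v u.

Definition into_head (k : ekind) : bool := match k with Fwd | Bi => true | Bwd => false end. (* V_{i-1} *-> V_i *)
Definition back_head (k : ekind) : bool := match k with Bwd | Bi => true | Fwd => false end. (* V_i <-* V_{i+1} *)

Definition sigma_blocked (T : finType) (G : mg T) (W : {set T}) (x : T)
    (s : seq (ekind * T)) : Prop :=
  let vs := x :: map snd s in
  let ks := map fst s in
  let n := size vs in
  let v i := nth x vs i in
  let k i := nth Fwd ks i in
  v 0 \in W \/ v n.-1 \in W \/
  exists i, 0 < i < n.-1 /\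
   (  (into_head (k i.-1) /\ back_head (k i) /\ v i \notin W)
   \/ (k i.-1 = Bwd /\ back_head (k i) /\ v i \in W /\ ~~ in_sc G (v i.-1) (v i))
   \/ (into_head (k i.-1) /\ k i = Fwd /\ v i \in W /\ ~~ in_sc G (v i.+1) (v i))
   \/ (k i.-1 = Bwd /\ k i = Fwd /\ v i \in W /\
         ~~ (in_sc G (v i.-1) (v i) && in_sc G (v i.+1) (v i)))).

Definition sigma_sep (T : finType) (G : mg T) (A B W : {set T}) : Prop :=
  forall (a : T) (s : seq (ekind * T)),
    a \in A -> last a (map snd s) \in B -> is_walk G a s -> sigma_blocked G W a s.

(* "A and B are sigma-separated given C, do(D) in G" (A,B,C,D in the extended graph). *)
Definition sep_do (T : finType) (G : mg T) (A B C D : {set (T + T)%type}) : Prop :=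
  sigma_sep (mutilate (ext G) D) A B (C :|: D).

Definition orig (T : finType) (S : {set T}) : {set (T + T)%type} := [set inl x | x in S].
Definition ivars (T : finType) (S : {set T}) : {set (T + T)%type} := [set inr x | x in S].

From mathcomp Require Import all_boot.
Set Implicit Arguments. Unset Strict Implicit. Unset Printing Implicit Defensive.

(* Take for G the largest DMG compatible with the cluster graph: u -> v (resp.
   u <-> v) whenever u != v and cl u -> cl v (resp. cl u <-> cl v).  It is
   compatible because the cluster graph is induced by some DMG, whose edges join
   distinct vertices; for the same reason a cluster incident to an edge always
   contains a vertex other than any given one.  Hence every walk of the
   extended, mutilated cluster graph lifts to a walk of the extended, mutilated
   G with the same edge kinds, and a nonempty directed path of clusters lifts to
   a directed path between any two distinct vertices of its end clusters, so
   two adjacent vertices of G are strongly connected as soon as their clusters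
   are.  A sigma-blocking of the lifted walk thus
   projects to a sigma-blocking of the cluster walk: sigma-separation in G
   implies sigma-separation in the cluster graph. *)

Definition map_walk (T Tc : Type) (f : T -> Tc) (s : seq (ekind * T)) :
    seq (ekind * Tc) :=
  [seq (p.1, f p.2) | p <- s].

Lemma map_walk_vertices (T Tc : Type) (f : T -> Tc) s :
  map snd (map_walk f s) = map f (map snd s).
Proof. by rewrite -!map_comp. Qed.

Lemma map_walk_kinds (T Tc : Type) (f : T -> Tc) s :
  map fst (map_walk f s) = map fst s.
Proof. by rewrite -map_comp. Qed.

Lemma is_walk_nth (T : finType) (G : mg T) z x s i : is_walk G x s -> i < size s ->
  edge_ok G (nth z (x :: map snd s) i) (nth Fwd (map fst s) i)
            (nth z (x :: map snd s) i.+1).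
Proof.
elim: s x i => [|[k y] s IH] x [|i] //= /andP[Exy Hs] Hi //.
exact: IH.
Qed.

Definition lifts_edges (T Tc : finType) (f : T -> Tc) (H : mg T) (Hc : mg Tc) :=
  forall x k c, edge_ok Hc (f x) k c -> exists2 y, f y = c & edge_ok H x k y.

Definition reflects_sc (T Tc : finType) (f : T -> Tc) (H : mg T) (Hc : mg Tc) :=
  forall x y, gdir H y x -> in_sc Hc (f x) (f y) -> in_sc H x y.

Section SigmaSepTransfer.
Variables (T Tc : finType) (f : T -> Tc) (H : mg T) (Hc : mg Tc).
Hypotheses (f_lifts : lifts_edges f H Hc) (f_sc : reflects_sc f H Hc).

Lemma lift_walk c s : is_walk Hc c s ->
  forall x, f x = c -> exists2 t, is_walk H x t & map_walk f t = s.
Proof.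
elim: s c => [|[k c'] s IH] c /=; first by exists [::].
move=> /andP[Ecc' Hs] x fx; subst c.
have [y fy /= Exy] := f_lifts Ecc'.
have [t Ht <-] := IH _ Hs y fy.
by exists ((k, y) :: t); rewrite /= ?Exy ?fy.
Qed.

Lemma sigma_blocked_map (W : {set Tc}) x s : is_walk H x s ->
  sigma_blocked H (f @^-1: W) x s -> sigma_blocked Hc W (f x) (map_walk f s).
Proof.
move=> Hs; rewrite /sigma_blocked; cbv beta zeta.
rewrite map_walk_vertices map_walk_kinds.
set vs := x :: map snd s; set ks := map fst s.
have -> : f x :: map f (map snd s) = map f vs by [].
have size_vs : size vs = (size s).+1 by rewrite /= size_map.
have nthf i : i < size vs -> nth (f x) (map f vs) i = f (nth x vs i) by apply: nth_map.
have not_sc_map a b : gdir H b a -> ~~ in_sc H a b -> ~~ in_sc Hc (f a) (f b).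
  by move=> Eba; apply: contra; apply: f_sc.
rewrite size_map !inE.
case=> [h|[h|[i [/andP[i_gt0 i_lt] blocked]]]].
- by left; rewrite nthf // size_vs.
- by right; left; rewrite nthf // size_vs.
right; right; exists i; split; first by rewrite i_gt0.
rewrite size_vs /= in i_lt.
have lt_prev : i.-1 < size s := leq_ltn_trans (leq_pred i) i_lt.
have Eprev := is_walk_nth x Hs lt_prev; rewrite prednK // -/vs -/ks in Eprev.
have Enext := is_walk_nth x Hs i_lt; rewrite -/vs -/ks in Enext.
rewrite !nthf ?size_vs ?ltnS ?(ltnW lt_prev) ?(ltnW i_lt) //.
move: blocked; rewrite !inE.
set v := nth x vs in Eprev Enext *; set k := nth Fwd ks in Eprev Enext *.
case=> [|[[kB [hB [Wi nsc]]]|[[hF [kF [Wi nsc]]]|[kB [kF [Wi nsc]]]]]]; first by left.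
- by rewrite kB in Eprev; right; left; do !split => //; apply: not_sc_map.
- by rewrite kF in Enext; right; right; left; do !split => //; apply: not_sc_map.
- rewrite kB in Eprev; rewrite kF in Enext.
  right; right; right; do !split => //.
  by apply: contra nsc => /andP[sc1 sc2]; rewrite !f_sc.
Qed.

Lemma sigma_sep_preimset (f_surj : forall c, exists x, f x = c) (A B W : {set Tc}) :
  sigma_sep H (f @^-1: A) (f @^-1: B) (f @^-1: W) -> sigma_sep Hc A B W.
Proof.
move=> sepH c s Ac Bs Hs.
have [x fx] := f_surj c.
have [t Ht Est] := lift_walk Hs fx; subst c s.
apply: sigma_blocked_map => //; apply: sepH Ht; first by rewrite inE.
by rewrite inE -last_map -map_walk_vertices.
Qed.

End SigmaSepTransfer.

Section ConnectLift.
Variables (T Tc : finType) (f : T -> Tc) (H : mg T) (Hc : mg Tc).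
Hypothesis f_hom : forall x y, gdir H x y -> gdir Hc (f x) (f y).
(* Fullness is only required out of heads of edges: an intervention node I_v of
   an extended graph is a source whose only successor is v. *)
Hypothesis f_full : forall z x y,
  gdir H z x -> x != y -> gdir Hc (f x) (f y) -> gdir H x y.
Hypothesis f_avoid : forall z x c,
  gdir H z x -> gdir Hc (f x) c -> exists2 y, f y = c & y != x.

Lemma connect_lift_path y c p : forall z x, gdir H z x -> x != y ->
  path (gdir Hc) (f x) (c :: p) -> last c p = f y -> connect (gdir H) x y.
Proof.
elim: p c => [|c' p IH] c z x Ezx nxy /=.
  by rewrite andbT => Ec Ecy; apply/connect1/(f_full Ezx nxy); rewrite -Ecy.
case/andP=> Ec Hp Hl.
have [w fw nwx] := f_avoid Ezx Ec.
have Exw : gdir H x w by apply: (f_full Ezx); rewrite 1?eq_sym // fw.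
have [<-|nwy] := eqVneq w y; first exact: connect1.
apply: connect_trans (connect1 Exw) (IH c' x w Exw nwy _ Hl).
by rewrite /= fw Hp.
Qed.

Lemma connect_lift x y :
  gdir H y x -> connect (gdir Hc) (f x) (f y) -> connect (gdir H) x y.
Proof.
have [->|nxy] := eqVneq x y; first by rewrite connect0.
move=> Eyx /connectP[[|c p] Hp Hl]; last exact: (connect_lift_path Eyx nxy Hp).
by apply/connect1/(f_full Eyx nxy); have := f_hom Eyx; rewrite /= in Hl; rewrite Hl.
Qed.

Lemma reflects_sc_connect_lift : reflects_sc f H Hc.
Proof.
move=> x y Eyx /andP[_ Cxy]; apply/andP.
by split; [apply: connect1 | apply: connect_lift].
Qed.

End ConnectLift.

Definition ext_map (T Tc : Type) (f : T -> Tc) (x : T + T) : Tc + Tc :=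
  match x with inl u => inl (f u) | inr u => inr (f u) end.

Lemma orig_preimset (T Tc : finType) (f : T -> Tc) (S : {set Tc}) :
  orig (f @^-1: S) = ext_map f @^-1: orig S.
Proof.
apply/setP=> -[u|u]; rewrite inE /orig /=.
  by rewrite !mem_imset ?inE // => ? ? [].
by apply/imsetP/imsetP => -[].
Qed.

Lemma ivars_preimset (T Tc : finType) (f : T -> Tc) (S : {set Tc}) :
  ivars (f @^-1: S) = ext_map f @^-1: ivars S.
Proof.
apply/setP=> -[u|u]; rewrite inE /ivars /=.
  by apply/imsetP/imsetP => -[].
by rewrite !mem_imset ?inE // => ? ? [].
Qed.

Lemma lifts_edges_ext (T Tc : finType) (f : T -> Tc) (H : mg T) (Hc : mg Tc) :
  lifts_edges f H Hc -> lifts_edges (ext_map f) (ext H) (ext Hc).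
Proof.
move=> f_lifts [] u [] [] l //= E.
- by have [y <- Euy] := f_lifts u Fwd l E; exists (inl y).
- by have [y <- Euy] := f_lifts u Bwd l E; exists (inl y).
- by exists (inr u); rewrite //= (eqP E).
- by have [y <- Euy] := f_lifts u Bi l E; exists (inl y).
- by exists (inl u); rewrite //= (eqP E).
Qed.

Lemma lifts_edges_mutilate (T Tc : finType) (f : T -> Tc) (H : mg T) (Hc : mg Tc)
    (D : {set Tc}) :
  lifts_edges f H Hc -> lifts_edges f (mutilate H (f @^-1: D)) (mutilate Hc D).
Proof.
move=> f_lifts x [] c /=.
- case/andP=> E nD; have [y fy /= Exy] := f_lifts x Fwd c E.
  by exists y => //=; rewrite inE fy Exy nD.
- case/andP=> E nD; have [y fy /= Eyx] := f_lifts x Bwd c E.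
  by exists y => //=; rewrite inE Eyx nD.
- case/and3P=> E nDx nDc; have [y fy /= Exy] := f_lifts x Bi c E.
  by exists y => //=; rewrite !inE fy Exy nDx nDc.
Qed.

Lemma compatible_edge_ok (V K : finType) (cl : V -> K) (G : mg V) (Gc : mg K) :
  compatible cl G Gc -> forall a k b,
  edge_ok Gc a k b =
    [exists u, exists v, [&& cl u == a, cl v == b & edge_ok G u k v]].
Proof.
move=> comp a [] b /=; [exact: (comp a b).1 | | exact: (comp a b).2].
rewrite (comp b a).1; apply/existsP/existsP => -[u /existsP[v /and3P[hu hv E]]].
all: by exists v; apply/existsP; exists u; rewrite hu hv E.
Qed.

Lemma dmg_edge_ok_irr (T : finType) (G : mg T) :
  is_dmg G -> forall u k, ~~ edge_ok G u k u.
Proof. by case=> dirr [_ birr] u []; rewrite /= ?dirr ?birr. Qed.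

Definition max_dmg (V K : finType) (cl : V -> K) (Gc : mg K) : mg V :=
  MG (fun u v => (u != v) && gdir Gc (cl u) (cl v))
     (fun u v => (u != v) && gbi Gc (cl u) (cl v)).

Section MaxDmg.
Variables (V K : finType) (cl : V -> K) (G0 : mg V) (Gc : mg K).
Hypotheses (G0_dmg : is_dmg G0) (G0_comp : compatible cl G0 Gc).

Lemma edge_ok_max_dmg u k v :
  edge_ok (max_dmg cl Gc) u k v = (u != v) && edge_ok Gc (cl u) k (cl v).
Proof. by case: k; rewrite //= eq_sym. Qed.

Lemma cluster_edge_max a k b : edge_ok Gc a k b =
  [exists u, exists v, [&& cl u == a, cl v == b & edge_ok (max_dmg cl Gc) u k v]].
Proof.
apply/idP/existsP => [|[u /existsP[v /and3P[/eqP <- /eqP <-]]]]; last first.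
  by rewrite edge_ok_max_dmg => /andP[].
move=> E; move: (E); rewrite (compatible_edge_ok G0_comp).
case/existsP=> u /existsP[v /and3P[/eqP hu /eqP hv Euv]].
exists u; apply/existsP; exists v; rewrite edge_ok_max_dmg hu hv E !eqxx andbT /=.
by apply: contraTneq Euv => <-; apply: dmg_edge_ok_irr.
Qed.

Lemma max_dmg_is_dmg : is_dmg (max_dmg cl Gc).
Proof.
case: G0_dmg => _ [G0_sym _].
split; last split; move=> u //=; rewrite ?eqxx // => v.
rewrite eq_sym !(G0_comp _ _).2; congr (_ && _).
by apply/existsP/existsP => -[a /existsP[b /and3P[ha hb E]]];
  exists b; apply/existsP; exists a; rewrite ha hb G0_sym E.
Qed.

Lemma max_dmg_compatible : compatible cl (max_dmg cl Gc) Gc.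
Proof.
by move=> a b; split; [apply: (cluster_edge_max a Fwd b) | apply: (cluster_edge_max a Bi b)].
Qed.

Lemma cluster_edge_other u k c :
  edge_ok Gc (cl u) k c -> exists2 w, cl w = c & w != u.
Proof.
rewrite cluster_edge_max => /existsP[a /existsP[b /and3P[/eqP ha /eqP hb]]].
rewrite edge_ok_max_dmg => /andP[nab _].
have [ebu|] := eqVneq b u; last by exists b.
by exists a; [rewrite ha -ebu hb | rewrite -ebu].
Qed.

Lemma lifts_edges_max_dmg : lifts_edges cl (max_dmg cl Gc) Gc.
Proof.
move=> u k c E; have [w hw nwu] := cluster_edge_other E.
by exists w; rewrite // edge_ok_max_dmg eq_sym nwu hw.
Qed.

Lemma reflects_sc_max_dmg (D : {set K + K}) :
  reflects_sc (ext_map cl) (mutilate (ext (max_dmg cl Gc)) (ext_map cl @^-1: D))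
    (mutilate (ext Gc) D).
Proof.
apply: reflects_sc_connect_lift.
- move=> [] u [] v //=; rewrite inE /=.
  + by case/andP=> /andP[_ ->] ->.
  + by case/andP=> /eqP-> ->; rewrite eqxx.
- move=> [] z [] u [] v //= _; rewrite !inE /= => nuv /andP[Euv nDv];
    by rewrite Euv nDv !andbT; apply: contraNneq nuv => ->.
- move=> [] z [] u [] l //= _ /andP[E _];
    have [w hw nwu] := cluster_edge_other (k := Fwd) E;
    by exists (inl w); rewrite /= ?hw.
Qed.

Lemma sep_do_max_dmg (cl_surj : forall k, exists v, cl v = k) (A B C D : {set K + K}) :
  sep_do (max_dmg cl Gc) (ext_map cl @^-1: A) (ext_map cl @^-1: B)
    (ext_map cl @^-1: C) (ext_map cl @^-1: D) ->
  sep_do Gc A B C D.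
Proof.
rewrite /sep_do -preimsetU; apply: sigma_sep_preimset.
- exact/lifts_edges_mutilate/lifts_edges_ext/lifts_edges_max_dmg.
- exact: reflects_sc_max_dmg.
- by case=> k; have [v <-] := cl_surj k; [exists (inl v) | exists (inr v)].
Qed.

End MaxDmg.

Unset Implicit Arguments.
Theorem theorem4 (V K : finType) (cl : V -> K)
    (cl_surj : forall k : K, exists v : V, cl v = k)
    (G0 : mg V) (G0_dmg : is_dmg G0) (Gc : mg K) (G0_comp : compatible cl G0 Gc)
    (CX CY CZ CW : {set K})
    (dXY : [disjoint CX & CY]) (dXZ : [disjoint CX & CZ]) (dXW : [disjoint CX & CW])
    (dYZ : [disjoint CY & CZ]) (dYW : [disjoint CY & CW]) (dZW : [disjoint CZ & CW]) :
  let X := cl @^-1: CX in let Y := cl @^-1: CY in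
  let Z := cl @^-1: CZ in let W := cl @^-1: CW in
  (* Rule 1 *)
  (~ sep_do Gc (orig CY) (orig CX) (orig CW) (orig CZ) ->
   exists G : mg V, [/\ is_dmg G, compatible cl G Gc &
     ~ sep_do G (orig Y) (orig X) (orig W) (orig Z)]) /\
  (* Rule 2 *)
  (~ sep_do Gc (orig CY) (ivars CX) (orig (CX :|: CW)) (orig CZ) ->
   exists G : mg V, [/\ is_dmg G, compatible cl G Gc &
     ~ sep_do G (orig Y) (ivars X) (orig (X :|: W)) (orig Z)]) /\
  (* Rule 3 *)
  (~ sep_do Gc (orig CY) (ivars CX) (orig CW) (orig CZ) ->
   exists G : mg V, [/\ is_dmg G, compatible cl G Gc &
     ~ sep_do G (orig Y) (ivars X) (orig W) (orig Z)]).
Proof.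
move=> X Y Z W.
have G_dmg := max_dmg_is_dmg G0_dmg G0_comp.
have G_comp := max_dmg_compatible G0_dmg G0_comp.
have sep_transfer := sep_do_max_dmg G0_dmg G0_comp cl_surj.
split; [|split] => not_sep; exists (max_dmg cl Gc); split => // sepG.
all: apply/not_sep/sep_transfer.
all: by rewrite -!orig_preimset -?ivars_preimset ?preimsetU.
Qed.
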